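(* In a partial synchronized communication system, every trajectory is covered if and only if, at some time, every ring contains a robot.
   Context: Model. A system consists of pairwise disjoint unit circles $C_1,\dots,C_n$ in the plane (trajectories) and a communication range $r>0$. Its communication graph $G$ has vertex set $\{C_1,\dots,C_n\}$, $C_i,C_j$ adjacent iff the distance between their centres is at most $2+r$. Positions on a circle are angles (mod $2\pi$). For an edge $(i,j)$, the link position $\phi_{ij}$ is the angle of the point of $C_i$ closest to $C_j$. A schedule $F=(f,g)$ assigns each circle a starting angle $f(C_i)$ and direction $g(C_i)\in\{1,-1\}$; a robot following it on $C_i$ is at $f(C_i)+g(C_i)2\pi t$ at time $t$. $F$ is a synchronization schedule if $g(C_i)=-g(C_j)$ for adjacent circles and robots following $F$ on adjacent $C_i,C_j$ are at $\phi_{ij},\phi_{ji}$ at exactly the same times. A synchronized communication system (SCS) consists of $n$ robots, initially one per circle, following a synchronization schedule, with the switching rule: when a robot on $C_i$ reaches $\phi_{ij}$ and $C_j$ is empty, it instantly passes to $C_j$ and follows the schedule of $C_j$; if $C_j$ has a robot, they meet and each stays on its circle. A partial SCS arises from an SCS by letting some robots leave (possibly at different times); the remaining robots never leave. A trajectory is covered if every point of it is visited periodically by the surviving robots. Rings. Trace a point moving along a circle $C_i$ in direction $g(C_i)$; whenever it reaches a link position $\phi_{ij}$ of its current circle, it passes to $C_j$ at $\phi_{ji}$ and continues in direction $g(C_j)$ (the motion of a robot that never meets anyone). This motion is periodic and the closed curve traced is a ring; every arc of a circle between consecutive link positions belongs to exactly one ring, so the circles decompose into rings overlapping only at link positions.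 A robot is in a ring if it lies on a point of that ring. *)

From Stdlib Require Import Reals.
From mathcomp Require Import ssreflect ssrbool eqtype ssrnat fintype.
Open Scope R_scope.

(** Geometry.  A system of [n] unit circles is given by their centres. *)
Definition point := (R * R)%type.

Definition dist (p q : point) : R :=
  sqrt ((fst p - fst q) ^ 2 + (snd p - snd q) ^ 2).

Definition disjoint_circles {n} (ctr : 'I_n -> point) : Prop :=
  forall i j : 'I_n, i <> j -> dist (ctr i) (ctr j) > 2.

Definition adjacent {n} (ctr : 'I_n -> point) (r : R) (i j : 'I_n) : Prop :=
  i <> j /\ dist (ctr i) (ctr j) <= 2 + r.

Definition pt {n} (ctr : 'I_n -> point) (i : 'I_n) (th : R) : point :=
  (fst (ctr i) + cos th, snd (ctr i) + sin th).

(** The link position on [C_i] for the edge (i,j): the point of [C_i]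
    closest to [C_j] (as a point of the plane; the angle phi_ij is its
    angle, determined mod 2 pi). *)
Definition link {n} (ctr : 'I_n -> point) (i j : 'I_n) : point :=
  let d := dist (ctr i) (ctr j) in
  (fst (ctr i) + (fst (ctr j) - fst (ctr i)) / d,
   snd (ctr i) + (snd (ctr j) - snd (ctr i)) / d).

Definition is_link {n} (ctr : 'I_n -> point) (r : R) (i : 'I_n) (P : point)
  : Prop := exists j, adjacent ctr r i j /\ P = link ctr i j.

(** Schedule: starting angle [f] and direction [g] (valued in {1,-1}).
    A robot following it on [C_i] is at angle [f i + g i * 2 pi t]. *)
Definition sched {n} (f g : 'I_n -> R) (i : 'I_n) (t : R) : R :=
  f i + g i * (2 * PI * t).

Definition spos {n} (ctr : 'I_n -> point) (f g : 'I_n -> R) (i : 'I_n) (t : R)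
  : point := pt ctr i (sched f g i t).

Definition is_schedule {n} (g : 'I_n -> R) : Prop :=
  forall i, g i = 1 \/ g i = -1.

Definition sync_schedule {n} (ctr : 'I_n -> point) (r : R) (f g : 'I_n -> R)
  : Prop :=
  is_schedule g /\
  forall i j, adjacent ctr r i j ->
    g i = - g j /\
    forall t, spos ctr f g i t = link ctr i j <-> spos ctr f g j t = link ctr j i.

Definition at_link {n} (ctr : 'I_n -> point) (r : R) (f g : 'I_n -> R)
  (i j : 'I_n) (t : R) : Prop :=
  adjacent ctr r i j /\ spos ctr f g i t = link ctr i j.

Definition left_lim {n} (p : R -> 'I_n) (t : R) (c : 'I_n) : Prop :=
  exists eps, 0 < eps /\ forall s, t - eps < s < t -> p s = c.

Definition right_const {n} (p : R -> 'I_n) (t : R) : Prop :=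
  exists eps, 0 < eps /\ forall s, t <= s < t + eps -> p s = p t.

(** ----- Partial SCS -----
   Robots are named by [k : 'I_n]; robot [k] starts on [C_k] at time 0.
   [leave k = Some L]: robot k leaves at time L (present on [0, L));
   [leave k = None]: robot k never leaves (a surviving robot).
   [pos k t] is the circle on which robot k is at time t; its position on
   that circle is the schedule point [spos ctr f g (pos k t) t]. *)
Definition present (leave : option R) (t : R) : Prop :=
  0 <= t /\ match leave with None => True | Some L => t < L end.

Definition surviving (leave : option R) : Prop := leave = None.

(** [C_j] is empty at time [t] (just before any switch at time t). *)
Definition empty_at {n} (leave : 'I_n -> option R) (pos : 'I_n -> R -> 'I_n)
  (j : 'I_n) (t : R) : Prop :=
  forall k, present (leave k) t -> ~ left_lim (pos k) t j.

Definition partial_scs {n} (ctr : 'I_n -> point) (r : R) (f g : 'I_n -> R)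
  (leave : 'I_n -> option R) (pos : 'I_n -> R -> 'I_n) : Prop :=
  forall k : 'I_n,
    (forall s, s < 0 -> pos k s = k) /\
    (forall t, present (leave k) t ->
       right_const (pos k) t /\
       exists c, left_lim (pos k) t c /\
         ((exists j, at_link ctr r f g c j t /\ empty_at leave pos j t
                     /\ pos k t = j)
          \/ ((forall j, ~ (at_link ctr r f g c j t /\ empty_at leave pos j t))
              /\ pos k t = c))).

(** ----- Rings -----
   Free motion of a point started on [C_i] at time [t0] (the motion of a
   robot that never meets anyone). *)
Definition free_motion {n} (ctr : 'I_n -> point) (r : R) (f g : 'I_n -> R)
  (i : 'I_n) (t0 : R) (q : R -> 'I_n) : Prop :=
  (forall s, s < t0 -> q s = i) /\
  (forall t, t0 <= t ->
     right_const q t /\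
     exists c, left_lim q t c /\
       ((exists j, at_link ctr r f g c j t /\ q t = j)
        \/ ((forall j, ~ at_link ctr r f g c j t) /\ q t = c))).

(** The (non-link) point [P'] of [C_j] lies on the ring through the
    (non-link) point [P] of [C_i]. Rings are taken as unions of the open
    arcs between consecutive link positions. *)
Definition same_ring {n} (ctr : 'I_n -> point) (r : R) (f g : 'I_n -> R)
  (i : 'I_n) (P : point) (j : 'I_n) (P' : point) : Prop :=
  ~ is_link ctr r i P /\ ~ is_link ctr r j P' /\
  exists t0 q, spos ctr f g i t0 = P /\ free_motion ctr r f g i t0 q /\
    exists s, t0 <= s /\ q s = j /\ spos ctr f g j s = P'.

Definition every_ring_has_robot {n} (ctr : 'I_n -> point) (r : R)
  (f g : 'I_n -> R) (leave : 'I_n -> option R) (pos : 'I_n -> R -> 'I_n)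
  (t : R) : Prop :=
  forall (i : 'I_n) (th : R), ~ is_link ctr r i (pt ctr i th) ->
    exists k, surviving (leave k) /\
      same_ring ctr r f g i (pt ctr i th) (pos k t) (spos ctr f g (pos k t) t).

Definition all_covered {n} (ctr : 'I_n -> point) (f g : 'I_n -> R)
  (leave : 'I_n -> option R) (pos : 'I_n -> R -> 'I_n) : Prop :=
  forall (i : 'I_n) (th : R), exists Per, 0 < Per /\
    forall t, 0 <= t -> exists s, t <= s <= t + Per /\
      exists k, surviving (leave k) /\ pos k s = i /\
                spos ctr f g i s = pt ctr i th.

(* The schedule is 1-periodic and link events are separated in time, so the
   motion of a point that never meets anyone (a free motion) is well defined
   and periodic; its trace is a ring.  Once the last robot has left, robots
   are never lost along a free motion: when the free motion passes to an
   occupied circle, the robot met there stays on it.  So a robot on a ring at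
   one time yields a robot on it at every later time, and hence periodic
   visits of every point of the ring.  Conversely, a point visited after the
   last departure yields, going backwards along its free motion, a robot on
   its ring at any later time without link events. *)

From Pilot Require Import Defs.
From Stdlib Require Import Reals Lra Lia ZArith Classical ClassicalEpsilon.
From mathcomp Require Import ssreflect ssrfun ssrbool eqtype ssrnat seq fintype.
Open Scope R_scope.

Lemma periodZ (h : R -> R) :
  (forall x k, h (x + 2 * INR k * PI) = h x) ->
  forall x (z : Z), h (x + 2 * IZR z * PI) = h x.
Proof.
move=> hper x z; case: (Z_le_gt_dec 0 z) => [z_ge0|z_lt0].
  by rewrite -(Z2Nat.id z) // -INR_IZR_INZ hper.
rewrite -(hper _ (Z.to_nat (- z))); f_equal.
by rewrite INR_IZR_INZ Z2Nat.id ?opp_IZR; [ring | lia].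
Qed.

Lemma cos_periodZ x (z : Z) : cos (x + 2 * IZR z * PI) = cos x.
Proof. exact: periodZ cos_period x z. Qed.

Lemma sin_periodZ x (z : Z) : sin (x + 2 * IZR z * PI) = sin x.
Proof. exact: periodZ sin_period x z. Qed.

Lemma cos_sin_eq_periodZ a b : cos a = cos b -> sin a = sin b ->
  exists z : Z, b = a + 2 * IZR z * PI.
Proof.
move=> eq_cos eq_sin.
have sin0 : sin (b - a) = 0 by rewrite sin_minus -eq_cos -eq_sin; ring.
have cos1 : cos (b - a) = 1.
  rewrite cos_minus -eq_cos -eq_sin; have := sin2_cos2 a; rewrite /Rsqr; lra.
case: (sin_eq_0_0 _ sin0) => k ek.
case: (Z.Even_or_Odd k) => [[m km]|[m km]].
  by exists m; rewrite km mult_IZR in ek; lra.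
have : cos (PI + 2 * IZR m * PI) = -1 by rewrite cos_periodZ cos_PI.
rewrite ek km plus_IZR mult_IZR in cos1.
have -> : PI + 2 * IZR m * PI = (2 * IZR m + 1) * PI by ring.
lra.
Qed.

Lemma shifted_integers_gap x : exists d, 0 < d /\
  forall z : Z, 0 < x + IZR z -> d <= x + IZR z.
Proof.
have [fl_le lt_fl] := Zfloor_bound x.
case: (Req_dec x (IZR (Zfloor x))) => [x_int|x_frac].
  exists 1; split=> [|z]; first lra.
  rewrite x_int -plus_IZR => /lt_IZR pos; apply: IZR_le; lia.
exists (x - IZR (Zfloor x)); split=> [|z pos]; first lra.
have : (- Zfloor x <= z)%Z by apply: Zlt_succ_le; apply: lt_IZR; rewrite succ_IZR opp_IZR; lra.
move/IZR_le; rewrite opp_IZR; lra.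
Qed.

Lemma finite_common_radius (T : finType) (Q : T -> R -> Prop) :
  (forall x e e', 0 < e' <= e -> Q x e -> Q x e') ->
  (forall x, exists e, 0 < e /\ Q x e) ->
  exists e, 0 < e /\ forall x, Q x e.
Proof.
move=> Q_shrink Q_ex.
suff [e [e_gt0 Qe]] : exists e, 0 < e /\ forall x, x \in enum T -> Q x e.
  by exists e; split=> // x; apply: Qe; rewrite mem_enum.
elim: (enum T) => [|a s [e [e_gt0 Qe]]].
  by exists 1; split=> [|x]; [lra | rewrite in_nil].
case: (Q_ex a) => ea [ea_gt0 Qa].
have min_gt0 := Rmin_pos _ _ e_gt0 ea_gt0.
exists (Rmin e ea); split=> // x; rewrite in_cons => /orP [/eqP ->|xs].
  by apply: (Q_shrink _ ea) => //; split=> //; apply: Rmin_r.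
by apply: (Q_shrink _ e); [split=> //; apply: Rmin_l | apply: Qe].
Qed.

Lemma finite_upper_bound (T : finType) (F : T -> R) : exists M, forall x, F x <= M.
Proof.
suff [M FM] : exists M, forall x, x \in enum T -> F x <= M.
  by exists M => x; apply: FM; rewrite mem_enum.
elim: (enum T) => [|a s [M FM]]; first by exists 0 => x; rewrite in_nil.
exists (Rmax M (F a)) => x; rewrite in_cons => /orP [/eqP ->|xs].
  exact: Rmax_r.
exact: Rle_trans (FM _ xs) (Rmax_l _ _).
Qed.

Lemma pigeonhole_ord n (h : 'I_n.+1 -> 'I_n) :
  exists x y : 'I_n.+1, (x < y)%N /\ h x = h y.
Proof.
case: (classic (injective h)) => [h_inj|h_ninj].
  by have := leq_card h h_inj; rewrite !card_ord ltnn.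
apply: NNPP => none; apply: h_ninj => x y hxy; apply: val_inj => /=.
case: (ltngtP x y) => // [xy|yx]; case: none; [by exists x, y | by exists y, x].
Qed.

Lemma real_ind_right (P : R -> Prop) a :
  (forall u, a <= u -> (forall v, a <= v < u -> P v) ->
     exists e, 0 < e /\ forall v, u <= v < u + e -> P v) ->
  forall u, a <= u -> P u.
Proof.
move=> step u1 au1; apply: NNPP => notP.
pose E x := forall v, a <= v < x -> P v.
have E_bound : bound E.
  by exists u1 => x Ex; apply: Rnot_lt_le => lt; apply: notP; apply: Ex; lra.
have Ea : E a by move=> v; lra.
have [m [m_ub m_lub]] := completeness E E_bound (ex_intro _ a Ea).
have am : a <= m by apply: m_ub => v; lra.
have Em : E m.
  move=> v [av vm]; apply: NNPP => nPv.
  suff : m <= v by lra.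
  by apply: m_lub => x Ex; apply: Rnot_lt_le => lt; apply: nPv; apply: Ex; lra.
case: (step m am Em) => e [e_gt0 Pe].
have : E (m + e) by move=> v [av ve]; case: (Rlt_le_dec v m) => vm; [apply: Em | apply: Pe]; lra.
by move/m_ub; lra.
Qed.

Lemma real_ind_left (P : R -> Prop) a b :
  (forall w, a <= w <= b -> (forall v, w < v <= b -> P v) ->
     P w /\ (a < w -> exists e, 0 < e /\ forall v, w - e < v < w -> P v)) ->
  forall w, a <= w <= b -> P w.
Proof.
move=> step w [aw wb]; rewrite -(Ropp_involutive w).
apply: (real_ind_right (fun x => a <= - x -> - x <= b -> P (- x)) (- b)); try lra.
move=> u bu IH.
case: (Rlt_le_dec (- u) a) => [ua|au].
  by exists (u + a); split=> [|v vu va]; lra.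
have IH' : forall v, - u < v <= b -> P v.
  by move=> v vu; rewrite -(Ropp_involutive v); apply: IH; lra.
case: (step (- u) ltac:(lra) IH') => Pu P_left.
case: (Rle_lt_or_eq_dec _ _ au) => [au_lt|au_eq].
  case: (P_left au_lt) => e [e_gt0 Pe]; exists e; split=> // v vu va vb.
  by case: (Req_dec v u) => [-> //|vu_ne]; apply: Pe; lra.
by exists 1; split=> [|v vu va vb]; [lra | have -> : v = u by lra].
Qed.

Lemma exists_left_close u a e1 e2 : a < u -> 0 < e1 -> 0 < e2 ->
  exists v, a <= v < u /\ u - e1 < v /\ u - e2 < v.
Proof.
move=> au e1_gt0 e2_gt0.
set m := Rmax a (Rmax (u - e1) (u - e2)).
have am : a <= m := Rmax_l _ _.
have e1m : u - e1 <= m by apply: Rle_trans (Rmax_r _ _); apply: Rmax_l.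
have e2m : u - e2 <= m by apply: Rle_trans (Rmax_r _ _); apply: Rmax_r.
have mu : m < u by repeat apply: Rmax_lub_lt; lra.
by exists ((m + u) / 2); lra.
Qed.

Lemma pos_le_min2 a b : 0 < a -> 0 < b -> exists x, 0 < x /\ x <= a /\ x <= b.
Proof.
move=> a_gt0 b_gt0; exists (Rmin a b).
by have := Rmin_l a b; have := Rmin_r a b; have := Rmin_pos a b a_gt0 b_gt0; lra.
Qed.

Lemma pos_le_min3 a b c : 0 < a -> 0 < b -> 0 < c ->
  exists x, 0 < x /\ x <= a /\ x <= b /\ x <= c.
Proof.
move=> a_gt0 b_gt0 c_gt0.
have [y [y_gt0 [yb yc]]] := pos_le_min2 b c b_gt0 c_gt0.
have [x [x_gt0 [xa xy]]] := pos_le_min2 a y a_gt0 y_gt0.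
by exists x; lra.
Qed.

Lemma left_lim_uniq n (p : R -> 'I_n) t c1 c2 :
  left_lim p t c1 -> left_lim p t c2 -> c1 = c2.
Proof.
move=> [e1 [e1_gt0 p1]] [e2 [e2_gt0 p2]].
have [v [[_ vt] [v1 v2]]] := exists_left_close t (t - 1) e1 e2 ltac:(lra) e1_gt0 e2_gt0.
by rewrite -(p1 v) ?(p2 v) //; lra.
Qed.

Lemma dist_sym (p q : point) : Defs.dist p q = Defs.dist q p.
Proof. by rewrite /Defs.dist; f_equal; ring. Qed.

Lemma right_const_intro n (p : R -> 'I_n) t b :
  t < b -> (forall s, t <= s < b -> p s = p t) -> right_const p t.
Proof. by move=> tb pc; exists (b - t); split=> [|s st]; [lra | apply: pc; lra]. Qed.

Lemma left_lim_intro n (p : R -> 'I_n) a t c :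
  a < t -> (forall s, a < s < t -> p s = c) -> left_lim p t c.
Proof. by move=> a_t pc; exists (t - a); split=> [|s st]; [lra | apply: pc; lra]. Qed.

Lemma progression_hits W N t : 0 < N ->
  exists m : nat, t <= W + INR m * N <= Rmax t W + N.
Proof.
move=> N_gt0; have tmax := Rmax_l t W; have Wmax := Rmax_r t W.
case: (Rle_lt_dec t W) => [tW|Wt].
  by exists 0%N; rewrite INR_0; lra.
have x_gt0 : 0 < (t - W) / N by apply: Rdiv_lt_0_compat; lra.
have [up_gt up_le] := archimed ((t - W) / N).
have up_ge0 : (0 <= up ((t - W) / N))%Z by apply: le_IZR; lra.
have xN : (t - W) / N * N = t - W by field; lra.
exists (Z.to_nat (up ((t - W) / N))); rewrite INR_IZR_INZ Z2Nat.id //.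
by split; nra.
Qed.

Section Schedule.
Variables (n : nat) (ctr : 'I_n -> point) (r : R) (f g : 'I_n -> R).
Hypothesis sync : sync_schedule ctr r f g.
Hypothesis links_distinct : forall i j k : 'I_n,
  adjacent ctr r i j -> adjacent ctr r i k -> link ctr i j = link ctr i k -> j = k.

Local Notation spos := (spos ctr f g).
Local Notation at_link := (at_link ctr r f g).

Lemma direction_unit c : g c = 1 \/ g c = -1.
Proof. by case: sync => dir _; apply: dir. Qed.

Lemma spos_shift c t (z : Z) : spos c (t + IZR z) = spos c t.
Proof.
rewrite /Defs.spos /pt /sched.
have -> : f c + g c * (2 * PI * (t + IZR z)) =
          f c + g c * (2 * PI * t) + 2 * (g c * IZR z) * PI by ring.
have [z' ->] : exists z' : Z, g c * IZR z = IZR z'.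
  by case: (direction_unit c) => ->; [exists z | exists (- z)%Z; rewrite opp_IZR]; ring.
by rewrite cos_periodZ sin_periodZ.
Qed.

Lemma spos_period c t1 t2 : spos c t1 = spos c t2 -> exists z : Z, t2 = t1 + IZR z.
Proof.
rewrite /Defs.spos /pt => -[eq_cos eq_sin].
have [z] := cos_sin_eq_periodZ (sched f g c t1) (sched f g c t2) ltac:(lra) ltac:(lra).
have PI_gt0 := PI_RGT_0.
rewrite /sched; case: (direction_unit c) => ->.
  by exists z; apply: (Rmult_eq_reg_l (2 * PI)); lra.
by exists (- z)%Z; rewrite opp_IZR; apply: (Rmult_eq_reg_l (2 * PI)); lra.
Qed.

Lemma spos_onto c th : exists t, spos c t = pt ctr c th.
Proof.
exists ((th - f c) * g c / (2 * PI)); rewrite /Defs.spos /sched; f_equal.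
by have PI_gt0 := PI_RGT_0; case: (direction_unit c) => ->; field; lra.
Qed.

Lemma at_link_shift c j t (z : Z) : at_link c j (t + IZR z) <-> at_link c j t.
Proof. by rewrite /Defs.at_link spos_shift. Qed.

Lemma at_link_period c j t1 t2 :
  at_link c j t1 -> at_link c j t2 -> exists z : Z, t2 = t1 + IZR z.
Proof. by move=> [_ link1] [_ link2]; apply: (spos_period c); rewrite link1 link2. Qed.

Definition event t := exists c j, at_link c j t.

Lemma at_link_gap c1 j1 c2 j2 : exists d, 0 < d /\ forall t1 t2,
  at_link c1 j1 t1 -> at_link c2 j2 t2 -> t1 < t2 -> d <= t2 - t1.
Proof.
case: (classic (exists e1, at_link c1 j1 e1)) => [[e1 link1]|no1]; last first.
  by exists 1; split=> [|t1 t2 l1]; [lra | case: no1; exists t1].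
case: (classic (exists e2, at_link c2 j2 e2)) => [[e2 link2]|no2]; last first.
  by exists 1; split=> [|t1 t2 l1 l2]; [lra | case: no2; exists t2].
have [d [d_gt0 gap]] := shifted_integers_gap (e2 - e1).
exists d; split=> // t1 t2 l1 l2.
case: (at_link_period _ _ _ _ link1 l1) => z1 ->.
case: (at_link_period _ _ _ _ link2 l2) => z2 -> lt12.
have := gap (z2 - z1)%Z; rewrite minus_IZR; lra.
Qed.

Lemma event_separation : exists d, 0 < d /\
  forall t1 t2, event t1 -> event t2 -> t1 < t2 -> d <= t2 - t1.
Proof.
have [d [d_gt0 gap]] := finite_common_radius _
  (fun (p : ('I_n * 'I_n) * ('I_n * 'I_n)) d => forall t1 t2,
     at_link p.1.1 p.1.2 t1 -> at_link p.2.1 p.2.2 t2 -> t1 < t2 -> d <= t2 - t1)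
  ltac:(by move=> p e e' e'e gap_e t1 t2 l1 l2 lt; have := gap_e t1 t2 l1 l2 lt; lra)
  (fun p => at_link_gap p.1.1 p.1.2 p.2.1 p.2.2).
exists d; split=> // t1 t2 [c1 [j1 l1]] [c2 [j2 l2]].
exact: (gap ((c1, j1), (c2, j2))).
Qed.

Lemma adjacent_sym i j : adjacent ctr r i j -> adjacent ctr r j i.
Proof. by move=> [ne d_le]; split; [auto | rewrite dist_sym]. Qed.

Lemma at_link_sym c j t : at_link c j t -> at_link j c t.
Proof.
move=> [adj at_cj]; split; first exact: adjacent_sym.
by case: sync => _ /(_ c j adj) [_ /(_ t) [+ _]]; apply.
Qed.

Lemma at_link_uniq_r c j j' t : at_link c j t -> at_link c j' t -> j = j'.
Proof. by move=> [adj at_j] [adj' at_j']; apply: (links_distinct c); rewrite // -at_j -at_j'. Qed.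

Lemma at_link_uniq_l c c' j t : at_link c j t -> at_link c' j t -> c = c'.
Proof. by move=> /at_link_sym l /at_link_sym l'; apply: at_link_uniq_r l l'. Qed.

Definition switch c t (x : 'I_n) :=
  (exists j, at_link c j t /\ x = j) \/ ((forall j, ~ at_link c j t) /\ x = c).

Lemma switch_fun c t x y : switch c t x -> switch c t y -> x = y.
Proof.
move=> [[j [lj ->]]|[nj ->]] [[j' [lj' ->]]|[nj' ->]] //.
- exact: at_link_uniq_r lj lj'.
- by case: (nj' j).
- by case: (nj j').
Qed.

Lemma switch_inj c1 c2 t x : switch c1 t x -> switch c2 t x -> c1 = c2.
Proof.
move=> [[j [lj ->]]|[nj ->]] [[j' [lj' ej]]|[nj' ej]]; subst.
- exact: at_link_uniq_l lj lj'.
- by case: (nj' c1); apply: at_link_sym.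
- by case: (nj c2); apply: at_link_sym.
- by [].
Qed.

Lemma switch_shift c t (z : Z) x : switch c (t + IZR z) x <-> switch c t x.
Proof.
split=> [[[j [lj ->]]|[nj ->]]|[[j [lj ->]]|[nj ->]]].
- by left; exists j; split=> //; apply/(at_link_shift _ _ _ z).
- by right; split=> // j /(at_link_shift _ _ _ z) /nj.
- by left; exists j; split=> //; apply/(at_link_shift _ _ _ z).
- by right; split=> // j /(at_link_shift _ _ _ z) /nj.
Qed.

Definition free_at (q : R -> 'I_n) t :=
  right_const q t /\ exists c, left_lim q t c /\ switch c t (q t).

Definition moves_freely (q : R -> 'I_n) a := forall t, a <= t -> free_at q t.

Lemma free_motion_moves i t0 q : free_motion ctr r f g i t0 q -> moves_freely q t0.
Proof. by case. Qed.

Lemma moves_freely_mono q a a' : moves_freely q a -> a <= a' -> moves_freely q a'.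
Proof. by move=> free aa' t a't; apply: free; lra. Qed.

Lemma moves_freely_shift q a (z : Z) :
  moves_freely q a -> moves_freely (fun u => q (u + IZR z)) (a - IZR z).
Proof.
move=> free t a_t.
case: (free (t + IZR z)) => [|[e [e_gt0 qr]] [c [[e' [e'_gt0 ql]] sw]]]; first lra.
split; first by exists e; split=> // s s_t; apply: qr; lra.
exists c; split; last exact/(switch_shift _ _ z).
by exists e'; split=> // s s_t; apply: ql; lra.
Qed.

Lemma moves_freely_uniq_fwd q1 q2 a1 a2 u0 :
  moves_freely q1 a1 -> moves_freely q2 a2 -> a1 <= u0 -> a2 <= u0 ->
  q1 u0 = q2 u0 -> forall u, u0 <= u -> q1 u = q2 u.
Proof.
move=> free1 free2 au1 au2 eq0.
apply: real_ind_right => u u0u IH.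
have eq_u : q1 u = q2 u.
  case: (Rle_lt_or_eq_dec _ _ u0u) => [lt|<-] //.
  case: (free1 u) => [|_ [c1 [[e1 [e1_gt0 l1]] sw1]]]; first lra.
  case: (free2 u) => [|_ [c2 [[e2 [e2_gt0 l2]] sw2]]]; first lra.
  have [v [v_u [v1 v2]]] := exists_left_close u u0 e1 e2 lt e1_gt0 e2_gt0.
  have c12 : c1 = c2 by rewrite -(l1 v) ?IH -?(l2 v) //; lra.
  by subst; apply: switch_fun sw1 sw2.
case: (free1 u) => [|[e1 [e1_gt0 r1]] _]; first lra.
case: (free2 u) => [|[e2 [e2_gt0 r2]] _]; first lra.
have [x [x_gt0 [xe1 xe2]]] := pos_le_min2 e1 e2 e1_gt0 e2_gt0.
by exists x; split=> // v v_u; rewrite r1 ?r2 //; lra.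
Qed.

Lemma moves_freely_uniq_bwd q1 q2 a b :
  moves_freely q1 a -> moves_freely q2 a -> a <= b ->
  (forall v, b <= v -> q1 v = q2 v) -> forall v, a <= v -> q1 v = q2 v.
Proof.
move=> free1 free2 ab eq_b v av.
case: (Rle_lt_dec b v) => [bv|vb]; first exact: eq_b.
apply: (real_ind_left (fun v => q1 v = q2 v) a b); last lra.
move=> w [aw wb] IH.
have eq_w : q1 w = q2 w.
  case: (Rle_lt_or_eq_dec _ _ wb) => [lt|->]; last by apply: eq_b; lra.
  case: (free1 w) => [|[e1 [e1_gt0 r1]] _]; first lra.
  case: (free2 w) => [|[e2 [e2_gt0 r2]] _]; first lra.
  have [x [x_gt0 [xb [xe1 xe2]]]] := pos_le_min3 (b - w) e1 e2 ltac:(lra) e1_gt0 e2_gt0.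
  by rewrite -(r1 (w + x / 2)) -?(r2 (w + x / 2)) ?IH //; lra.
split=> // aw_lt.
case: (free1 w) => [|_ [c1 [[e1 [e1_gt0 l1]] sw1]]]; first lra.
case: (free2 w) => [|_ [c2 [[e2 [e2_gt0 l2]] sw2]]]; first lra.
rewrite eq_w in sw1; have c12 := switch_inj _ _ _ _ sw1 sw2; subst c2.
have [x [x_gt0 [xe1 xe2]]] := pos_le_min2 e1 e2 e1_gt0 e2_gt0.
by exists x; split=> // u u_w; rewrite l1 ?l2 //; lra.
Qed.

Lemma free_motion_start i t0 q : free_motion ctr r f g i t0 q ->
  ~ is_link ctr r i (spos i t0) -> q t0 = i.
Proof.
move=> [before free] not_link.
case: (free t0) => [|_ [c [lc sw]]]; first lra.
have ci : c = i.
  by apply: (left_lim_uniq _ _ _ _ _ lc); exists 1; split=> [|s s_t]; [lra | apply: before; lra].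
subst c; case: sw => [[j [[adj at_j] _]]|[_ ->]] //.
by case: not_link; exists j.
Qed.

(** Two of the circles at times [t0], ..., [t0 + n] agree; since the schedule
    is 1-periodic and a free motion is determined by its circle at one time,
    the motion repeats from there on. *)
Lemma free_motion_periodic i t0 q : free_motion ctr r f g i t0 q ->
  ~ is_link ctr r i (spos i t0) -> exists N : nat, (0 < N)%N /\
  forall (m : nat) u, t0 <= u -> q (u + INR m * INR N) = q u.
Proof.
move=> fm not_link; have free := free_motion_moves _ _ _ fm.
case: (pigeonhole_ord _ (fun m : 'I_n.+1 => q (t0 + INR m))) => m1 [m2 [m12 eq_q]].
exists (m2 - m1)%N; split; first by rewrite subn_gt0.
set N := (m2 - m1)%N.
have m2E : INR m2 = INR m1 + INR N.
  by rewrite -plus_INR; f_equal; rewrite plusE subnKC // ltnW.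
have free_shift := moves_freely_shift _ _ (Z.of_nat N) free.
rewrite -INR_IZR_INZ in free_shift.
have m1_ge0 := pos_INR m1; have N_ge0 := pos_INR N.
have period u : t0 <= u -> q (u + INR N) = q u.
  move=> t0u; symmetry.
  apply: (moves_freely_uniq_bwd _ _ t0 (t0 + INR m1) free
            (moves_freely_mono _ _ t0 free_shift ltac:(lra))) => // [|v v_ge]; first lra.
  apply: (moves_freely_uniq_fwd _ _ _ _ (t0 + INR m1) free free_shift) => //; try lra.
  by rewrite eq_q m2E Rplus_assoc.
elim=> [|m IH] u t0u; first by rewrite INR_0 Rmult_0_l Rplus_0_r.
have m_ge0 := pos_INR m.
rewrite S_INR (_ : u + (INR m + 1) * INR N = u + INR m * INR N + INR N); last by ring.
by rewrite period ?IH //; nra.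
Qed.

Lemma free_motion_const j t0 q b : free_motion ctr r f g j t0 q ->
  (forall t, t0 <= t < b -> ~ event t) -> forall t, t0 <= t < b -> q t = j.
Proof.
move=> [before free] no_event.
suff qj : forall t, t0 <= t -> t < b -> q t = j by move=> t [t0t tb]; apply: qj.
apply: real_ind_right => u t0u IH.
case: (Rlt_le_dec u b) => [ub|bu]; last by exists 1; split=> [|v vu vb]; lra.
case: (free u t0u) => [[e [e_gt0 qr]] [c [lc sw]]].
have lj : left_lim q u j.
  case: (Rle_lt_or_eq_dec _ _ t0u) => [lt|<-].
    by exists (u - t0); split=> [|s s_u]; [lra | apply: IH; lra].
  by exists 1; split=> [|s s_u]; [lra | apply: before; lra].
have cj := left_lim_uniq _ _ _ _ _ lc lj; subst c.
have quj : q u = j.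
  case: sw => [[j' [lj' _]]|[_ ->]] //.
  by case: (no_event u); [lra | exists j, j'].
by exists e; split=> // v vu vb; rewrite qr.
Qed.

Section FreeMotionExists.
Variables (i : 'I_n) (t0 d : R).
Hypothesis d_gt0 : 0 < d.
Hypothesis separated : forall t1 t2, event t1 -> event t2 -> t1 < t2 -> d <= t2 - t1.

(** Time is cut into windows of length [d]; each contains at most one event,
    so a free motion switches at most once per window. *)
Definition window (m : nat) t := t0 + INR m * d <= t < t0 + INR m * d + d.

Lemma window_event_uniq m t1 t2 :
  event t1 -> event t2 -> window m t1 -> window m t2 -> t1 = t2.
Proof.
rewrite /window => ev1 ev2 w1 w2.
case: (Rtotal_order t1 t2) => [lt|[//|gt]].
- by have := separated _ _ ev1 ev2 lt; lra.
- by have := separated _ _ ev2 ev1 gt; lra.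
Qed.

Definition window_index u := Z.to_nat (Zfloor ((u - t0) / d)).

Lemma window_index_spec u : t0 <= u -> window (window_index u) u.
Proof.
move=> t0u; have [fl_le lt_fl] := Zfloor_bound ((u - t0) / d).
have fl_ge0 : (0 <= Zfloor ((u - t0) / d))%Z.
  by apply: Zfloor_lub; apply: Rmult_le_pos; [lra | left; apply: Rinv_0_lt_compat].
rewrite /window /window_index INR_IZR_INZ Z2Nat.id //.
have ud : (u - t0) / d * d = u - t0 by field; lra.
by split; nra.
Qed.

Lemma window_index_eq m u : window m u -> window_index u = m.
Proof.
rewrite /window /window_index => -[lo hi].
have ud : (u - t0) / d * d = u - t0 by field; lra.
rewrite (Zfloor_eq (Z.of_nat m)) ?Nat2Z.id // -INR_IZR_INZ.
by split; [apply: (Rmult_le_reg_r d) | apply: (Rmult_lt_reg_r d)]; lra.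
Qed.

Definition exits_in (c : 'I_n) m j := exists t, window m t /\ at_link c j t.

Definition next_circle c m : 'I_n :=
  epsilon (inhabits c)
    (fun j => exits_in c m j \/ ((forall j', ~ exits_in c m j') /\ j = c)).

Lemma next_circle_exit c m j : exits_in c m j -> next_circle c m = j.
Proof.
move=> [t [wt lt]]; rewrite /next_circle.
case: (epsilon_spec (inhabits c)
  (fun j => exits_in c m j \/ ((forall j', ~ exits_in c m j') /\ j = c))).
- by exists j; left; exists t.
- move=> [t' [wt' lt']].
  have tt' : t' = t by apply: (window_event_uniq m) => //; do 2 eexists; eassumption.
  by subst t'; apply: at_link_uniq_r lt' lt.
- by move=> [no _]; case: (no j); exists t.
Qed.

Lemma next_circle_stay c m : (forall j, ~ exits_in c m j) -> next_circle c m = c.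
Proof.
move=> no; rewrite /next_circle.
case: (epsilon_spec (inhabits c)
  (fun j => exits_in c m j \/ ((forall j', ~ exits_in c m j') /\ j = c))) => //.
- by exists c; right.
- by move=> ex; case: (no _ ex).
- by case.
Qed.

Fixpoint window_circle (m : nat) : 'I_n :=
  if m is m'.+1 then next_circle (window_circle m') m' else i.

Local Notation wc := window_circle.

Definition exited m u :=
  exists t j, t0 + INR m * d <= t <= u /\ at_link (wc m) j t.

Definition free_path u : 'I_n :=
  if Rlt_dec u t0 then i else
  let m := window_index u in
  if excluded_middle_informative (exited m u)
  then wc m.+1 else wc m.

Lemma free_path_window m u : window m u ->
  (exited m u -> free_path u = wc m.+1) /\ (~ exited m u -> free_path u = wc m).
Proof.
move=> wu; have t0u : t0 <= u by have := pos_INR m; rewrite /window in wu; nra.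
rewrite /free_path; destruct (Rlt_dec u t0); first lra.
rewrite (window_index_eq m u wu).
by case: (excluded_middle_informative (exited m u)).
Qed.

Lemma free_path_exit m tau j : window m tau -> at_link (wc m) j tau ->
  forall u, window m u -> (tau <= u -> free_path u = j) /\ (u < tau -> free_path u = wc m).
Proof.
move=> wtau ltau u wu; have [exited_u not_exited_u] := free_path_window m u wu.
split=> tu.
  rewrite exited_u; last by exists tau, j; rewrite /window in wtau; split=> //; lra.
  by apply: next_circle_exit; exists tau.
apply: not_exited_u => -[t' [j' [t'_u lt']]].
suff : t' = tau by lra.
apply: (window_event_uniq m) => //; try by do 2 eexists; eassumption.
by rewrite /window in wu wtau *; lra.
Qed.

Lemma free_path_stay m : (forall j, ~ exits_in (wc m) m j) ->
  forall u, window m u -> free_path u = wc m.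
Proof.
move=> no u wu; apply: (proj2 (free_path_window m u wu)) => -[t' [j' [t'_u lt']]].
by case: (no j'); exists t'; rewrite /window in wu *; split=> //; lra.
Qed.

Lemma free_path_left m t : window m t ->
  (forall tau j, t0 + INR m * d <= tau < t -> ~ at_link (wc m) j tau) ->
  left_lim free_path t (wc m).
Proof.
move=> wt quiet; case: (Rle_lt_or_eq_dec _ _ (proj1 wt)) => [lt|start].
  apply: (left_lim_intro _ _ (t0 + INR m * d)) => // s s_t.
  apply: (proj2 (free_path_window m s _)); first by rewrite /window in wt *; lra.
  by move=> [t' [j' [t'_s /quiet]]]; apply; lra.
case: m start wt quiet => [|m] start wt quiet.
  apply: (left_lim_intro _ _ (t - 1)) => [|s s_t]; first lra.
  rewrite /free_path; destruct (Rlt_dec s t0) => //.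
  by rewrite INR_0 in start; lra.
rewrite S_INR in start.
case: (classic (exists j, exits_in (wc m) m j)) => [[j [tau [wtau ltau]]]|no].
  rewrite /= (next_circle_exit _ _ j); last by exists tau.
  apply: (left_lim_intro _ _ tau) => [|s s_t]; first by rewrite /window in wtau; lra.
  apply: (proj1 (free_path_exit m tau j wtau ltau s _)); rewrite /window in wtau *; lra.
have no' : forall j, ~ exits_in (wc m) m j by move=> j ex; apply: no; exists j.
rewrite /= (next_circle_stay _ _ no').
apply: (left_lim_intro _ _ (t - d)) => [|s s_t]; first lra.
by apply: free_path_stay => //; rewrite /window; lra.
Qed.

Lemma free_path_free_exit m tau j t :
  window m tau -> at_link (wc m) j tau -> window m t -> free_at free_path t.
Proof.
move=> wtau ltau wt; have path_at := free_path_exit m tau j wtau ltau.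
have lone c j' t' : t0 + INR m * d <= t' <= t -> at_link c j' t' -> t' = tau.
  move=> t'_t l'; apply: (window_event_uniq m) => //; try by do 2 eexists; eassumption.
  by rewrite /window in wt *; lra.
have quiet tau' j' : t0 + INR m * d <= tau' < t -> tau' <> tau -> ~ at_link (wc m) j' tau'.
  by move=> range ne l; apply: ne; apply: (lone _ j') l; lra.
case: (Rle_lt_dec tau t) => [taut|ttau].
  have qt : free_path t = j by apply: (proj1 (path_at t wt)).
  split.
    apply: (right_const_intro _ _ _ (t0 + INR m * d + d)) => [|s s_t]; first by case: wt.
    by rewrite qt; apply: (proj1 (path_at s _)); rewrite /window in wt *; lra.
  case: (Rle_lt_or_eq_dec _ _ taut) => [lt|eq].
    exists j; split.
      apply: (left_lim_intro _ _ tau) => // s s_t.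
      by apply: (proj1 (path_at s _)); rewrite /window in wt wtau *; lra.
    by right; split=> // j' /(lone _ _ _ (conj (proj1 wt) (Rle_refl t))); lra.
  exists (wc m); split; last by left; exists j; split; [rewrite -eq | ].
  by apply: free_path_left => // tau' j' range; apply: quiet; lra.
have qt : free_path t = wc m by apply: (proj2 (path_at t wt)).
split.
  apply: (right_const_intro _ _ _ tau) => // s s_t.
  by rewrite qt; apply: (proj2 (path_at s _)); rewrite /window in wt wtau *; lra.
exists (wc m); split.
  by apply: free_path_left => // tau' j' range; apply: quiet; lra.
by right; split=> // j' /(lone _ _ _ (conj (proj1 wt) (Rle_refl t))); lra.
Qed.

Lemma free_path_free_stay m t :
  (forall j, ~ exits_in (wc m) m j) -> window m t -> free_at free_path t.
Proof.
move=> no wt; have qt := free_path_stay m no t wt.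
have quiet tau j : window m tau -> ~ at_link (wc m) j tau.
  by move=> wtau l; apply: (no j); exists tau.
split.
  apply: (right_const_intro _ _ _ (t0 + INR m * d + d)) => [|s s_t]; first by case: wt.
  by rewrite qt; apply: free_path_stay => //; rewrite /window in wt *; lra.
exists (wc m); split.
  by apply: free_path_left => // tau j range; apply: quiet; rewrite /window in wt *; lra.
by right; split=> // j; apply: quiet.
Qed.

Lemma free_path_free_motion : free_motion ctr r f g i t0 free_path.
Proof.
split=> [s s_t0|t t0t].
  by rewrite /free_path; destruct (Rlt_dec s t0).
have wt := window_index_spec t t0t.
case: (classic (exists j, exits_in (wc (window_index t)) (window_index t) j)).
  by move=> [j [tau [wtau ltau]]]; exact: (free_path_free_exit _ tau j t wtau ltau wt).
by move=> no; apply: (free_path_free_stay _ t _ wt) => j ex; apply: no; exists j.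
Qed.

End FreeMotionExists.

Lemma free_motion_exists i t0 : exists q, free_motion ctr r f g i t0 q.
Proof.
have [d [d_gt0 separated]] := event_separation.
by exists (free_path i t0 d); apply: free_path_free_motion.
Qed.

Lemma free_motion_from_earlier i s1 b : ~ is_link ctr r i (spos i s1) ->
  exists t0 q, t0 <= b /\ spos i t0 = spos i s1 /\ free_motion ctr r f g i t0 q /\ q s1 = i.
Proof.
move=> not_link; have [q1 fm1] := free_motion_exists i s1.
have [N [N_gt0 period]] := free_motion_periodic _ _ _ fm1 not_link.
have N_ge1 : 1 <= INR N by apply: (le_INR 1); apply/leP.
have [K [K_lo _]] := progression_hits 0 (INR N) (s1 - b) ltac:(lra).
have K_ge0 := pos_INR K.
pose D := INR K * INR N.
have DZ : D = IZR (Z.of_nat K * Z.of_nat N) by rewrite /D mult_IZR -!INR_IZR_INZ.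
exists (s1 - D), (fun u => q1 (u + D)); split; first by rewrite /D; lra.
split; first by rewrite DZ -(spos_shift _ _ (Z.of_nat K * Z.of_nat N)); f_equal; ring.
split; last by rewrite period ?(free_motion_start _ _ _ fm1) //; lra.
split=> [u u_lt|].
  by case: fm1 => before _; apply: before; lra.
have := moves_freely_shift _ _ (Z.of_nat K * Z.of_nat N) (free_motion_moves _ _ _ fm1).
by rewrite -DZ.
Qed.

Section NearEvent.
Variable d : R.
Hypothesis d_gt0 : 0 < d.
Hypothesis separated : forall t1 t2, event t1 -> event t2 -> t1 < t2 -> d <= t2 - t1.

Lemma not_link_before_event c t1 : event t1 -> ~ is_link ctr r c (spos c (t1 - d / 2)).
Proof.
move=> ev [j [adj link_c]].
by have := separated (t1 - d / 2) t1 ltac:(by exists c, j) ev ltac:(lra); lra.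
Qed.

(** No link position is met between [t1 - d/2] and [t1], so the free motion
    is still on [C_j] when it reaches [phi_ji]. *)
Lemma free_motion_enters_link i j t1 t0 q : at_link i j t1 ->
  free_motion ctr r f g j t0 q -> spos j t0 = spos j (t1 - d / 2) ->
  q (t0 + d / 2) = i /\ spos i (t0 + d / 2) = spos i t1.
Proof.
move=> l1 fm start; case: (spos_period _ _ _ start) => z tz.
have wE : t0 + d / 2 = t1 + IZR (- z) by rewrite opp_IZR; lra.
split; last by rewrite wE spos_shift.
have no_event t : t0 <= t < t0 + d / 2 -> ~ event t.
  move=> range [c [c' l]].
  have ev : event (t + IZR z) by exists c, c'; apply/at_link_shift.
  by have := separated _ t1 ev ltac:(by exists i, j) ltac:(lra); lra.
have on_j := free_motion_const _ _ _ _ fm no_event.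
case: (free_motion_moves _ _ _ fm (t0 + d / 2)) => [|_ [c [lc sw]]]; first lra.
have lj : left_lim q (t0 + d / 2) j.
  by apply: (left_lim_intro _ _ t0) => [|s s_t]; [lra | apply: on_j; lra].
have cj := left_lim_uniq _ _ _ _ _ lc lj; subst c.
apply: (switch_fun j (t0 + d / 2)) => //; left; exists i; split=> //.
by rewrite wE; apply/at_link_shift; apply: at_link_sym.
Qed.

End NearEvent.

Section Robots.
Variables (leave : 'I_n -> option R) (pos : 'I_n -> R -> 'I_n).
Hypothesis scs : partial_scs ctr r f g leave pos.
Variable T : R.
Hypothesis T_ge0 : 0 <= T.
Hypothesis left_before : forall k L, leave k = Some L -> L <= T.

Definition occupied u (x : 'I_n) := exists k, surviving (leave k) /\ pos k u = x.

Definition robot_switch k c t :=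
  (exists j, at_link c j t /\ empty_at leave pos j t /\ pos k t = j)
  \/ ((forall j, ~ (at_link c j t /\ empty_at leave pos j t)) /\ pos k t = c).

Lemma surviving_present k t : surviving (leave k) -> 0 <= t -> present (leave k) t.
Proof. by rewrite /surviving /present => ->. Qed.

Lemma present_surviving k t : T <= t -> present (leave k) t -> surviving (leave k).
Proof.
rewrite /surviving /present; case E: (leave k) => [L|] // Tt [_ tL].
by have := left_before _ _ E; lra.
Qed.

Lemma robot_moves k t : present (leave k) t ->
  right_const (pos k) t /\ exists c, left_lim (pos k) t c /\ robot_switch k c t.
Proof. by case: (scs k) => _; apply. Qed.

Lemma surviving_common_left t : 0 <= t -> exists e, 0 < e /\
  forall k, surviving (leave k) -> exists c, forall s, t - e < s < t -> pos k s = c.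
Proof.
move=> t_ge0; apply: (finite_common_radius _ (fun k e => surviving (leave k) ->
  exists c, forall s, t - e < s < t -> pos k s = c)).
  move=> k e e' e'e + sk => /(_ sk) [c pc].
  by exists c => s st; apply: pc; lra.
move=> k; case: (classic (surviving (leave k))) => sk; last by exists 1; split=> //; lra.
case: (robot_moves k t (surviving_present _ _ sk t_ge0)) => _ [c [[e [e_gt0 pc]] _]].
by exists e; split=> // _; exists c.
Qed.

Lemma surviving_common_right t : 0 <= t -> exists e, 0 < e /\
  forall k, surviving (leave k) -> forall s, t <= s < t + e -> pos k s = pos k t.
Proof.
move=> t_ge0; apply: (finite_common_radius _ (fun k e => surviving (leave k) ->
  forall s, t <= s < t + e -> pos k s = pos k t)).
  by move=> k e e' e'e pc sk s st; apply: pc => //; lra.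
move=> k; case: (classic (surviving (leave k))) => sk; last by exists 1; split=> //; lra.
by case: (robot_moves k t (surviving_present _ _ sk t_ge0)) => -[e [e_gt0 pc]] _; exists e.
Qed.

Lemma not_empty_arrival j t : T <= t -> ~ empty_at leave pos j t ->
  exists k, surviving (leave k) /\ present (leave k) t /\ left_lim (pos k) t j.
Proof.
move=> Tt not_empty; apply: NNPP => none; apply: not_empty => k pk lk.
by apply: none; exists k; split=> //; apply: (present_surviving _ t).
Qed.

Lemma occupied_switch_fwd u c x k : T <= u -> switch c u x -> surviving (leave k) ->
  left_lim (pos k) u c -> occupied u x.
Proof.
move=> Tu sw sk lk.
case: (robot_moves k u (surviving_present k u sk ltac:(lra))) => _ [c' [lk' rsw]].
have c'c := left_lim_uniq _ _ _ _ _ lk' lk; subst c'.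
case: sw => [[j [lj ->]]|[nj ->]]; last first.
  by exists k; split=> //; case: rsw => [[j' [lj' _]]|[_ ->]] //; case: (nj j').
case: rsw => [[j' [lj' [_ pj']]]|[nj _]].
  by exists k; split=> //; rewrite pj'; apply: at_link_uniq_r lj' lj.
have [k2 [sk2 [pk2 lk2]]] := not_empty_arrival j u Tu (fun e => nj j (conj lj e)).
exists k2; split=> //.
case: (robot_moves k2 u pk2) => _ [c2 [lk2' rsw2]].
have c2j := left_lim_uniq _ _ _ _ _ lk2' lk2; subst c2.
case: rsw2 => [[j'' [lj'' [empty _]]]|[_ ->]] //.
have j''c := at_link_uniq_r _ _ _ _ lj'' (at_link_sym _ _ _ lj); subst j''.
by case: (empty k (surviving_present k u sk ltac:(lra)) lk).
Qed.

Lemma occupied_switch_bwd u c k : T <= u -> switch c u (pos k u) -> surviving (leave k) ->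
  exists k', surviving (leave k') /\ left_lim (pos k') u c.
Proof.
move=> Tu sw sk.
case: (robot_moves k u (surviving_present k u sk ltac:(lra))) => _ [c0 [lk0 rsw]].
case: sw => [[j [lj ej]]|[nj ej]]; case: rsw => [[j' [lj' [_ pj']]]|[nj' pc0]].
- rewrite pj' in ej; subst j.
  by exists k; split=> //; rewrite (at_link_uniq_l _ _ _ _ lj lj').
- rewrite pc0 in ej; subst j.
  have [k2 [sk2 [_ lk2]]] := not_empty_arrival c u Tu
    (fun e => nj' c (conj (at_link_sym _ _ _ lj) e)).
  by exists k2.
- by rewrite pj' in ej; subst c; case: (nj c0); apply: at_link_sym.
- by rewrite pc0 in ej; subst c; exists k.
Qed.

Lemma occupied_right u x q : 0 <= u -> occupied u x -> right_const q u -> q u = x ->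
  exists e, 0 < e /\ forall v, u <= v < u + e -> occupied v (q v).
Proof.
move=> u_ge0 [k [sk pk]] [e1 [e1_gt0 q_const]] qx.
case: (robot_moves k u (surviving_present _ _ sk u_ge0)) => -[e2 [e2_gt0 p_const]] _.
have [e [e_gt0 [ee1 ee2]]] := pos_le_min2 e1 e2 e1_gt0 e2_gt0.
by exists e; split=> // v vu; exists k; split=> //; rewrite p_const ?q_const ?qx ?pk //; lra.
Qed.

(** After the last robot has left, surviving robots are never lost along a
    free motion: when the free motion passes to [C_j] either the robot passes
    too, or it meets a robot arriving on [C_j], which then stays there. *)
Lemma occupied_fwd q a : moves_freely q a -> T <= a -> occupied a (q a) ->
  forall u, a <= u -> occupied u (q u).
Proof.
move=> free Ta occ_a; apply: real_ind_right => u au IH.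
have occ_u : occupied u (q u).
  case: (Rle_lt_or_eq_dec _ _ au) => [lt|<-] //.
  case: (free u) => [|_ [c [[e1 [e1_gt0 ql]] sw]]]; first lra.
  case: (surviving_common_left u) => [|e2 [e2_gt0 common]]; first lra.
  case: (exists_left_close u a e1 e2) => // v [av [v1 v2]].
  case: (IH v av) => k [sk pkv].
  case: (common k sk) => ck pk.
  have ckc : ck = c by rewrite -(pk v) ?pkv ?ql //; lra.
  subst ck; apply: (occupied_switch_fwd u c _ k) => //; first lra.
  by exists e2; split.
case: (free u) => [|qr _]; first lra.
by apply: (occupied_right u (q u) q) => //; lra.
Qed.

Lemma occupied_bwd q a b : moves_freely q a -> T <= a -> a <= b -> occupied b (q b) ->
  forall w, a <= w <= b -> occupied w (q w).
Proof.
move=> free Ta ab occ_b; apply: real_ind_left => w [aw wb] IH.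
have occ_w : occupied w (q w).
  case: (Rle_lt_or_eq_dec _ _ wb) => [lt|->] //.
  case: (free w) => [|[e1 [e1_gt0 qr]] _]; first lra.
  case: (surviving_common_right w) => [|e2 [e2_gt0 common]]; first lra.
  have [x [x_gt0 [xb [xe1 xe2]]]] := pos_le_min3 (b - w) e1 e2 ltac:(lra) e1_gt0 e2_gt0.
  case: (IH (w + x / 2)) => [|k [sk pk]]; first lra.
  by exists k; split=> //; rewrite -(common k sk (w + x / 2)) ?pk ?qr //; lra.
split=> // aw_lt.
case: (free w) => [|_ [c [[e1 [e1_gt0 ql]] sw]]]; first lra.
case: occ_w => k [sk pk]; rewrite -pk in sw.
case: (occupied_switch_bwd w c k) => [|||k' [sk' [e2 [e2_gt0 pk']]]] //; first lra.
have [x [x_gt0 [xe1 xe2]]] := pos_le_min2 e1 e2 e1_gt0 e2_gt0.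
by exists x; split=> // v vw; exists k'; split=> //; rewrite pk' ?ql //; lra.
Qed.

Definition covered i P := exists Per, 0 < Per /\ forall t, 0 <= t ->
  exists s, t <= s <= t + Per /\
    exists k, surviving (leave k) /\ pos k s = i /\ spos i s = P.

Lemma occupied_free_motion j t0 q s : free_motion ctr r f g j t0 q -> t0 <= s ->
  occupied T (q s) -> spos (q s) s = spos (q s) T ->
  exists z : Z, t0 <= T + IZR z /\ forall u, T <= u -> occupied u (q (u + IZR z)).
Proof.
move=> fm t0s occ_s same_pos; case: (spos_period _ _ _ same_pos) => z Ts.
exists (- z)%Z; rewrite opp_IZR; split; first lra.
have free := moves_freely_shift _ _ (- z) (free_motion_moves _ _ _ fm).
rewrite opp_IZR in free.
have occ_T : occupied T (q (T + - IZR z)) by rewrite (_ : T + - IZR z = s) //; lra.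
exact: (occupied_fwd _ T (moves_freely_mono _ _ T free ltac:(lra)) (Rle_refl T) occ_T).
Qed.

(** A periodic free motion occupied from time [T] on brings a robot back to
    each of its points once per period. *)
Lemma covered_of_free_motion j t0 q w (z : Z) :
  free_motion ctr r f g j t0 q -> ~ is_link ctr r j (spos j t0) ->
  (forall u, T <= u -> occupied u (q (u + IZR z))) -> t0 <= w ->
  covered (q w) (spos (q w) w).
Proof.
move=> fm not_link occ t0w.
have [N [N_gt0 period]] := free_motion_periodic _ _ _ fm not_link.
have N_ge1 : 1 <= INR N by apply: (le_INR 1); apply/leP.
pose W := w - IZR z.
exists (T + Rabs W + INR N + 1); split=> [|t t_ge0].
  by have := Rabs_pos W; lra.
pose u := Rmax t T.
have t_u : t <= u := Rmax_l t T.
have T_u : T <= u := Rmax_r t T.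
have u_le : u <= t + T by apply: Rmax_lub; lra.
have [m [lo hi]] := progression_hits W (INR N) u ltac:(lra).
have max_le : Rmax u W <= u + Rabs W.
  by apply: Rmax_lub; [have := Rabs_pos W | have := Rle_abs W]; lra.
have sE : W + INR m * INR N + IZR z = w + INR m * INR N by rewrite /W; ring.
exists (W + INR m * INR N); split; first lra.
case: (occ (W + INR m * INR N)) => [|k [sk pk]]; first lra.
rewrite sE period // in pk; exists k; split=> //; split=> //.
have -> : W + INR m * INR N = w + IZR (- z) + IZR (Z.of_nat m * Z.of_nat N).
  by rewrite /W opp_IZR mult_IZR -!INR_IZR_INZ; ring.
by rewrite !spos_shift.
Qed.

Lemma covered_on_ring j P k : surviving (leave k) ->
  same_ring ctr r f g j P (pos k T) (spos (pos k T) T) ->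
  exists t0 q, spos j t0 = P /\ free_motion ctr r f g j t0 q /\
    forall w, t0 <= w -> covered (q w) (spos (q w) w).
Proof.
move=> sk [not_link [_ [t0 [q [start [fm [s [t0s [qs same_pos]]]]]]]]].
rewrite -qs in same_pos.
have occ_s : occupied T (q s) by exists k.
have [z [_ occ]] := occupied_free_motion _ _ _ _ fm t0s occ_s same_pos.
exists t0, q; split=> //; split=> // w t0w.
by apply: (covered_of_free_motion _ _ _ _ z fm) => //; rewrite start.
Qed.

Lemma covered_of_ring_robots :
  every_ring_has_robot ctr r f g leave pos T -> all_covered ctr f g leave pos.
Proof.
move=> ring i th; change (covered i (pt ctr i th)).
case: (classic (is_link ctr r i (pt ctr i th))) => [[j [adj link_ij]]|not_link].
  have [t1 at_t1] := spos_onto i th.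
  have l1 : at_link i j t1 by split=> //; rewrite at_t1.
  have [d [d_gt0 separated]] := event_separation.
  have [k [sk same]] := ring j (sched f g j (t1 - d / 2))
    (not_link_before_event d d_gt0 separated j t1 ltac:(by exists i, j)).
  have [t0 [q [start [fm cov]]]] := covered_on_ring _ _ _ sk same.
  have [q_w spos_w] := free_motion_enters_link d d_gt0 separated _ _ _ _ _ l1 fm start.
  by have := cov (t0 + d / 2); rewrite q_w spos_w at_t1; apply; lra.
have [k [sk same]] := ring i th not_link.
have [t0 [q [start [fm cov]]]] := covered_on_ring _ _ _ sk same.
have q_t0 : q t0 = i by apply: (free_motion_start _ _ _ fm); rewrite start.
by have := cov t0; rewrite q_t0 start; apply; lra.
Qed.

Lemma ring_robots_of_covered : all_covered ctr f g leave pos -> ~ event T ->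
  every_ring_has_robot ctr r f g leave pos T.
Proof.
move=> cov quiet i th not_link.
have [Per [_ visits]] := cov i th.
have [s1 [[Ts1 _] [k1 [sk1 [pk1 at_s1]]]]] := visits T T_ge0.
have not_link1 : ~ is_link ctr r i (spos i s1) by rewrite at_s1.
have [t0 [q [t0T [start [fm q_s1]]]]] := free_motion_from_earlier i s1 T not_link1.
have occ_s1 : occupied s1 (q s1) by exists k1; rewrite q_s1.
have free := moves_freely_mono _ _ T (free_motion_moves _ _ _ fm) t0T.
have [k [sk pk]] := occupied_bwd q T s1 free (Rle_refl T) Ts1 occ_s1 T (conj (Rle_refl T) Ts1).
exists k; split=> //; split=> //; split.
  by move=> [j [adj l]]; apply: quiet; exists (pos k T), j.
exists t0, q; split; first by rewrite start at_s1.
by split=> //; exists T; rewrite pk.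
Qed.

End Robots.

Lemma exists_quiet_time_after M : exists t, M <= t /\ ~ event t.
Proof.
have [d [d_gt0 separated]] := event_separation.
case: (classic (event M)) => [ev|]; last by exists M; split=> //; lra.
exists (M + d / 2); split=> [|ev']; first lra.
by have := separated _ _ ev ev' ltac:(lra); lra.
Qed.

End Schedule.

Theorem theorem3 (n : nat) (ctr : 'I_n -> point) (r : R) (f g : 'I_n -> R)
  (leave : 'I_n -> option R) (pos : 'I_n -> R -> 'I_n) :
  disjoint_circles ctr -> 0 < r ->
  (* link positions on a circle are pairwise distinct (needed for the
     switching rule and the rings to be well defined) *)
  (forall i j k : 'I_n, adjacent ctr r i j -> adjacent ctr r i k ->
     link ctr i j = link ctr i k -> j = k) ->
  sync_schedule ctr r f g ->
  partial_scs ctr r f g leave pos ->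
  (all_covered ctr f g leave pos <->
   exists t, 0 <= t /\ (forall k L, leave k = Some L -> L <= t) /\
             every_ring_has_robot ctr r f g leave pos t).
Proof.
move=> _ _ links_distinct sync scs; split=> [cov|[t [t_ge0 [left_before ring]]]].
  have [M leave_le] := finite_upper_bound _
    (fun k => if leave k is Some L then L else 0).
  have [t [Mt quiet]] := exists_quiet_time_after _ _ _ _ _ sync (Rmax 0 M).
  have zero_le := Rmax_l 0 M; have M_le := Rmax_r 0 M.
  have left_before k L : leave k = Some L -> L <= t.
    by move=> leave_k; have := leave_le k; rewrite leave_k; lra.
  exists t; split; first lra; split=> //.
  exact: (ring_robots_of_covered _ _ _ _ _ sync links_distinct _ _ scs t ltac:(lra) left_before cov quiet).
exact: (covered_of_ring_robots _ _ _ _ _ sync links_distinct _ _ scs t t_ge0 left_before ring).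
Qed.
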